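(* Let $A$ be a normal uniform Kan complex, $\pi:B\to A^{\mathrm{I}}$ a normal uniform Kan fibration, and $b:A\to B$ a map with $\pi\circ b=r$, where $r:A\to A^{\mathrm{I}}$ is the constant-path map. Then there is a map $j:A^{\mathrm{I}}\to B$ with $\pi\circ j=1_{A^{\mathrm{I}}}$ and $j\circ r=b$.
   Context: Let $\mathbb{B}$ be the category of finite sets $[n]=\{\bot,x_1,\dots,x_n,\top\}$ ($n\ge0$, $\bot\ne\top$) and functions preserving $\bot,\top$; cartesian cubical sets are presheaves on $\mathbb{B}^{op}$. $\mathrm{I}^n$ is the representable on $[n]$, $\mathrm{I}^n\cong\mathrm{I}\times\dots\times\mathrm{I}$, $\mathrm{I}=\mathrm{I}^1$, $\mathrm{I}^0=1$; the two maps $[1]\to[0]$ give endpoints $0,1:1\to\mathrm{I}$. $A^{\mathrm{I}}$ is the exponential and $r:A\to A^{\mathrm{I}}$ is induced by $\mathrm{I}\to1$. For $1\le i\le n$, $d\in\{0,1\}$, the face $\alpha_i^d:\mathrm{I}^{n-1}\to\mathrm{I}^n$ inserts $d$ in coordinate $i$; for $e\in\{0,1\}$ the open box $\sqcup^n_e\rightarrowtail\mathrm{I}^n$ is the union of the images of all faces $\alpha_i^d$ with $(i,d)\ne(1,e)$, with inclusion $i^n_e$. A uniform Kan fibration structure on $f:Y\to X$: for each $n\ge1$, $e\in\{0,1\}$, $k\ge1$ and commutative square $b':\mathrm{I}^k\times\sqcup^n_e\to Y$, $a:\mathrm{I}^k\times\mathrm{I}^n\to X$ with $fb'=a(1\times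 i^n_e)$, a chosen filler $\phi(a,b')$ ($\phi(a,b')(1\times i^n_e)=b'$, $f\phi(a,b')=a$), with $\phi(a,b')(\alpha\times1)=\phi(a(\alpha\times1),b'(\alpha\times1))$ for all $\alpha:\mathrm{I}^j\to\mathrm{I}^k$ ($j\ge1$). It is normal if for all $n\ge0$, $e$, $k\ge1$ and $c:\mathrm{I}^k\times\mathrm{I}^n\to Y$, with $\pi_n:\mathrm{I}^{n+1}\to\mathrm{I}^n$ forgetting the first coordinate, $\phi(fc(1\times\pi_n),c(1\times\pi_n)(1\times i^{n+1}_e))=c(1\times\pi_n)$. A normal uniform Kan complex is a cubical set $A$ with a normal uniform Kan fibration structure on $A\to1$. *)

From Stdlib Require Import FunctionalExtensionality ProofIrrelevance.
From mathcomp Require Import all_boot.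

Set Implicit Arguments.
Unset Strict Implicit.
Unset Printing Implicit Defensive.

(* The object [n] = {bot, x_1..x_n, top}.  An element of
   [m] other than bot/top is  inl j  (j : 'I_m, standing for x_(j+1));
   inr false = bot, inr true = top.  A morphism [n] -> [m] preserving
   bot and top is determined by the images of x_1..x_n.                    *)
Definition elt (m : nat) : finType := ('I_m + bool)%type.
Definition Hom (n m : nat) := {ffun 'I_n -> elt m}.

Definition hcomp n m k (g : Hom m k) (f : Hom n m) : Hom n k :=
  [ffun i => match f i with inl j => g j | inr b => inr b end].
Definition hid n : Hom n n := [ffun i => inl i].

Lemma hcomp_id_l n m (f : Hom n m) : hcomp (hid m) f = f.
Proof. apply/ffunP => i; rewrite !ffunE; case: (f i) => [j|b] //; by rewrite ffunE. Qed.
Lemma hcomp_id_r n m (f : Hom n m) : hcomp f (hid n) = f.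
Proof. apply/ffunP => i; by rewrite !ffunE. Qed.
Lemma hcomp_assoc n m k l (h : Hom k l) (g : Hom m k) (f : Hom n m) :
  hcomp h (hcomp g f) = hcomp (hcomp h g) f.
Proof. apply/ffunP => i; rewrite !ffunE; case: (f i) => [j|b] //=; by rewrite ffunE. Qed.

(* Cartesian cubical sets: presheaves on B^op = functors B -> Type.        *)
Record cset := CSet {
  cobj :> nat -> Type;
  cact : forall n m, Hom n m -> cobj n -> cobj m;
  cact_id : forall n x, cact (hid n) x = x;
  cact_comp : forall n m k (f : Hom n m) (g : Hom m k) x,
      cact (hcomp g f) x = cact g (cact f x) }.
Arguments cact {c n m}.

Record cmap (X Y : cset) := CMap {
  cfun :> forall n, X n -> Y n;
  cnat : forall n m (f : Hom n m) x, cfun (cact f x) = cact f (cfun x) }.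
Arguments cfun {X Y} c {n}.

Lemma cmap_ext X Y (F G : cmap X Y) :
  (forall n (x : X n), cfun F x = cfun G x) -> F = G.
Proof.
case: F => f fn; case: G => g gn /= H.
have E : f = g.
  apply: functional_extensionality_dep => n; apply: functional_extensionality => x; exact: H.
subst g; f_equal; exact: proof_irrelevance.
Qed.

Definition ccomp X Y Z (G : cmap Y Z) (F : cmap X Y) : cmap X Z.
Proof.
refine (@CMap X Z (fun n x => cfun G (cfun F x)) _).
by move=> n m f x; rewrite !cnat.
Defined.

Definition cid X : cmap X X.
Proof. by refine (@CMap X X (fun n x => x) _). Defined.

Lemma sig_ext (T : Type) (P : T -> Prop) (x y : {a : T | P a}) :
  proj1_sig x = proj1_sig y -> x = y.
Proof. case: x => a pa; case: y => b pb /= E; subst b; f_equal; exact: proof_irrelevance. Qed.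

Definition Icube (n : nat) : cset.
Proof.
refine (@CSet (fun m => Hom n m) (fun m m' f a => hcomp f a) _ _).
- by move=> m a; rewrite hcomp_id_l.
- by move=> m m' k f g a; rewrite hcomp_assoc.
Defined.

Definition cterm : cset.
Proof. by refine (@CSet (fun _ => unit) (fun _ _ _ x => x) _ _). Defined.

Definition toterm (X : cset) : cmap X cterm.
Proof. by refine (@CMap X cterm (fun _ _ => tt) _). Defined.

Definition cprod (X Y : cset) : cset.
Proof.
refine (@CSet (fun m => (X m * Y m)%type)
          (fun m m' f p => (cact f p.1, cact f p.2)) _ _).
- by move=> m [x y] /=; rewrite !cact_id.
- by move=> m m' k f g [x y] /=; rewrite !cact_comp.
Defined.

Definition cprodmap X X' Y Y' (F : cmap X X') (G : cmap Y Y') :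
  cmap (cprod X Y) (cprod X' Y').
Proof.
refine (@CMap (cprod X Y) (cprod X' Y')
          (fun n p => (cfun F p.1, cfun G p.2)) _).
by move=> n m f [x y] /=; rewrite !cnat.
Defined.

Definition yon m m' (f : Hom m m') : cmap (Icube m') (Icube m).
Proof.
refine (@CMap (Icube m') (Icube m) (fun n (a : Hom m' n) => hcomp a f) _).
by move=> n k h a /=; rewrite hcomp_assoc.
Defined.

(* Face alpha_(i+1)^d : I^n -> I^(n+1) inserting d in coordinate i+1
   (i : 'I_(n+1); coordinate 1 is i = ord0; d = false is 0, true is 1). *)
Definition faceY n (i : 'I_n.+1) (d : bool) : Hom n.+1 n :=
  [ffun j => match unlift i j with Some k => inl k | None => inr d end].
Definition face n (i : 'I_n.+1) (d : bool) : cmap (Icube n) (Icube n.+1) :=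
  yon (faceY i d).

(* pi_n : I^(n+1) -> I^n forgetting the first coordinate *)
Definition projY n : Hom n n.+1 := [ffun j => inl (lift ord0 j)].
Definition proj n : cmap (Icube n.+1) (Icube n) := yon (projY n).

(* The open box  sqcup^(n+1)_e  as a sub-presheaf of I^(n+1): the union of
   the images of all faces alpha_i^d with (i,d) <> (1,e). *)
Definition inbox n (e : bool) m (a : Hom n.+1 m) : Prop :=
  exists (i : 'I_n.+1) (d : bool), ~ (i = ord0 /\ d = e) /\
    exists y : Icube n m, cfun (face i d) y = a.

Lemma inbox_act n e m m' (f : Hom m m') (a : Hom n.+1 m) :
  @inbox n e m a -> @inbox n e m' (hcomp f a).
Proof.
case=> i [d [ne [y Hy]]]; exists i, d; split => //.
exists (@cact (Icube n) _ _ f y).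
by rewrite (cnat (face i d)) Hy.
Qed.

Definition Box (n : nat) (e : bool) : cset.
Proof.
refine (@CSet (fun m => {a : Hom n.+1 m | @inbox n e m a})
          (fun m m' f x => exist _ (hcomp f (proj1_sig x))
                                 (inbox_act f (proj2_sig x))) _ _).
- by move=> m x; apply: sig_ext; rewrite /= hcomp_id_l.
- by move=> m m' k f g x; apply: sig_ext; rewrite /= hcomp_assoc.
Defined.

Definition boxinc (n : nat) (e : bool) : cmap (Box n e) (Icube n.+1).
Proof. by refine (@CMap (Box n e) (Icube n.+1) (fun m x => proj1_sig x) _). Defined.

Definition expI (A : cset) : cset.
Proof.
refine (@CSet (fun m => cmap (cprod (Icube m) (Icube 1)) A)
          (fun m m' f phi => ccomp phi (cprodmap (yon f) (cid (Icube 1)))) _ _).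
- move=> m phi; apply: cmap_ext => n [a t] /=; by rewrite hcomp_id_r.
- move=> m m' k f g phi; apply: cmap_ext => n [a t] /=; by rewrite hcomp_assoc.
Defined.

(* r : A -> A^I, induced by I -> 1 (constant paths) *)
Definition rI_at (A : cset) m (x : A m) : cmap (cprod (Icube m) (Icube 1)) A.
Proof.
refine (@CMap (cprod (Icube m) (Icube 1)) A (fun n (p : cprod (Icube m) (Icube 1) n) => cact p.1 x) _).
by move=> n k h [a t] /=; rewrite cact_comp.
Defined.

Definition rI (A : cset) : cmap A (expI A).
Proof.
refine (@CMap A (expI A) (fun m x => rI_at x) _).
move=> n m f x; apply: cmap_ext => k [a t] /=; by rewrite cact_comp.
Defined.

(* Uniform Kan fibration structures.  Dimensions n >= 1, k >= 1, j >= 1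
   are written n.+1, k.+1, j.+1. *)
Record UKan (Y X : cset) (f : cmap Y X) := {
  kfill : forall n e k
      (a : cmap (cprod (Icube k.+1) (Icube n.+1)) X)
      (b' : cmap (cprod (Icube k.+1) (Box n e)) Y),
      ccomp f b' = ccomp a (cprodmap (cid _) (boxinc n e)) ->
      cmap (cprod (Icube k.+1) (Icube n.+1)) Y;
  kfill_box : forall n e k a b' H,
      ccomp (@kfill n e k a b' H) (cprodmap (cid _) (boxinc n e)) = b';
  kfill_fib : forall n e k a b' H,
      ccomp f (@kfill n e k a b' H) = a;
  kfill_unif : forall n e k j (alpha : cmap (Icube j.+1) (Icube k.+1)) a b' H H',
      ccomp (@kfill n e k a b' H) (cprodmap alpha (cid _)) =
      @kfill n e j (ccomp a (cprodmap alpha (cid _)))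
                   (ccomp b' (cprodmap alpha (cid _))) H' }.

Definition normal (Y X : cset) (f : cmap Y X) (phi : UKan f) : Prop :=
  forall n e k (c : cmap (cprod (Icube k.+1) (Icube n)) Y) H,
    @kfill _ _ _ phi n e k
      (ccomp f (ccomp c (cprodmap (cid _) (proj n))))
      (ccomp (ccomp c (cprodmap (cid _) (proj n))) (cprodmap (cid _) (boxinc n e)))
      H
    = ccomp c (cprodmap (cid _) (proj n)).

From mathcomp Require Import all_boot.

(** Given an m-cube [g] of [A^I], fill the open box in [A] over the square
    with coordinates [(s, t)] whose faces [s = 0] and [t = 0] are constant at
    [g 0] and whose face [t = 1] is [g]; as [t] varies, the filler is a path
    in [A^I] from [r (g 0)] to [g].  Lift it along [pi] starting at [b (g 0)]
    and take the end point: this is [j g].  Uniformity of both filling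
    structures makes [j] natural, and the fibration condition gives
    [pi \o j = 1].  If [g = r x], all the boxes involved are degenerate, so by
    normality the fillers are the degenerate ones and [j (r x) = b x]. *)

Set Implicit Arguments.
Unset Strict Implicit.
Unset Printing Implicit Defensive.

Lemma cfun_congr X Y (F G : cmap X Y) n (x : X n) : F = G -> cfun F x = cfun G x.
Proof. by move=> ->. Qed.

Section KanFillers.
Variables (Y X : cset) (f : cmap Y X) (phi : UKan f).

Lemma kfill_boxE n e k a b' H m (z : Hom k.+1 m) (w : Box n e m) :
  cfun (@kfill _ _ _ phi n e k a b' H)
    ((z, proj1_sig w) : cprod (Icube k.+1) (Icube n.+1) m) =
  cfun b' ((z, w) : cprod (Icube k.+1) (Box n e) m).
Proof. exact: (cfun_congr ((z, w) : cprod (Icube k.+1) (Box n e) m) (kfill_box phi H)). Qed.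

Lemma kfill_fibE n e k a b' H m (x : cprod (Icube k.+1) (Icube n.+1) m) :
  cfun f (cfun (@kfill _ _ _ phi n e k a b' H) x) = cfun a x.
Proof. exact: (cfun_congr x (kfill_fib phi H)). Qed.

Lemma kfill_unifE n e k j (alpha : cmap (Icube j.+1) (Icube k.+1)) a b' H a' b'' H' :
  ccomp a (cprodmap alpha (cid _)) = a' -> ccomp b' (cprodmap alpha (cid _)) = b'' ->
  ccomp (@kfill _ _ _ phi n e k a b' H) (cprodmap alpha (cid _)) =
  @kfill _ _ _ phi n e j a' b'' H'.
Proof. by move=> E1 E2; subst; exact: kfill_unif. Qed.

Lemma kfill_degenerate (nphi : normal phi) n e k (c : cmap (cprod (Icube k.+1) (Icube n)) Y)
    a b' H :
  a = ccomp f (ccomp c (cprodmap (cid _) (proj n))) ->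
  b' = ccomp (ccomp c (cprodmap (cid _) (proj n))) (cprodmap (cid _) (boxinc n e)) ->
  @kfill _ _ _ phi n e k a b' H = ccomp c (cprodmap (cid _) (proj n)).
Proof. by move=> Ea Eb; subst; exact: nphi. Qed.

End KanFillers.

Definition endpt d m : Hom 1 m := [ffun _ => inr d].

Lemma endpt_nat d m m' (h : Hom m m') : hcomp h (endpt d m) = endpt d m'.
Proof. by apply/ffunP => i; rewrite !ffunE. Qed.

Definition cube_pair m (u v : Hom 1 m) : Hom 2 m :=
  [ffun i : 'I_2 => if val i == 0 then u ord0 else v ord0].

Lemma cube_pair_nat m m' (h : Hom m m') u v :
  hcomp h (cube_pair u v) = cube_pair (hcomp h u) (hcomp h v).
Proof. by apply/ffunP => i; rewrite !ffunE; case: ifP. Qed.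

Lemma inboxP n e m (a : Hom n.+1 m) :
  inbox e a <-> exists i d, ~ (i = ord0 /\ d = e) /\ a i = inr d.
Proof.
split=> [[i [d [ne [y <-]]]]|[i [d [ne Ei]]]].
  by exists i, d; split=> //=; rewrite !ffunE unlift_none.
exists i, d; split=> //; exists [ffun k => a (lift i k)].
apply/ffunP => j /=; rewrite !ffunE.
by case: unliftP => [k ->|->]; rewrite ?ffunE.
Qed.

Lemma inbox1P m (a : Hom 1 m) : inbox true a <-> a = endpt false m.
Proof.
split=> [/inboxP [i [[] [ne Ei]]]|->].
- by case: ne; rewrite (ord1 i).
- by apply/ffunP => j; rewrite !ffunE (ord1 j) -(ord1 i).
by apply/inboxP; exists ord0, false; rewrite ffunE; split=> // [[_]].
Qed.

Lemma inbox2_coords m (a : Hom 2 m) : inbox true a ->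
  [\/ a ord_max = inr false, a ord_max = inr true | a ord0 = inr false].
Proof.
case/inboxP=> [[[|[|i]] Hi] [d [ne Ei]]] //.
- have -> : ord0 = Ordinal Hi by exact: val_inj.
  by case: d ne Ei => [ne|_ ->]; [case: ne; split=> //; exact: val_inj|constructor 3].
- have -> : ord_max = Ordinal Hi by exact: val_inj.
  by rewrite Ei; case: d {ne Ei}; [constructor 2|constructor 1].
Qed.

Lemma inbox_pair_endpt m (t : Hom 1 m) d : inbox true (cube_pair t (endpt d m)).
Proof.
apply/inboxP; exists ord_max, d; split; first by case=> /(congr1 val).
by rewrite !ffunE.
Qed.

(** On the open box [s = 0 \/ t = 0 \/ t = 1] this is [(s, t) |-> min s t];
    it is not defined on the whole square, cartesian cubes having no connections. *)
Definition box_meet m (a : Hom 2 m) : Hom 1 m :=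
  [ffun _ => match a ord_max with inr true => a ord0 | _ => inr false end].

Lemma box_meet_nat m m' (h : Hom m m') a : inbox true a ->
  box_meet (hcomp h a) = hcomp h (box_meet a).
Proof.
move=> /inbox2_coords Ha; apply/ffunP => i; rewrite !ffunE.
case: Ha => ->; rewrite //.
by case: (a ord_max) => [j|[]] //=; case: (h j) => [?|[]].
Qed.

Lemma box_meet_pair0 m (t : Hom 1 m) :
  box_meet (cube_pair t (endpt false m)) = endpt false m.
Proof. by apply/ffunP => i; rewrite !ffunE. Qed.

Lemma box_meet_pair1 m (t : Hom 1 m) : box_meet (cube_pair t (endpt true m)) = t.
Proof. by apply/ffunP => i; rewrite !ffunE (ord1 i). Qed.

Definition box_meet_map : cmap (Box 1 true) (Icube 1).
Proof.
refine (@CMap (Box 1 true) (Icube 1) (fun m a => box_meet (proj1_sig a)) _).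
by move=> n m h [a Ha]; exact: box_meet_nat.
Defined.

Definition cconst0 X : cmap X (Icube 1).
Proof.
refine (@CMap X (Icube 1) (fun m _ => endpt false m) _).
by move=> n m h x; rewrite /= endpt_nat.
Defined.

Definition hext m m' (f : Hom m m') : Hom m.+1 m'.+1 :=
  [ffun i => match unlift ord0 i with
             | None => inl ord0
             | Some j => match f j with inl k => inl (lift ord0 k) | inr d => inr d end
             end].

Lemma hext_proj m m' (f : Hom m m') : hcomp (hext f) (projY m) = hcomp (projY m') f.
Proof.
apply/ffunP => j; rewrite !ffunE liftK.
by case: (f j) => [k|d] //; rewrite ffunE.
Qed.

Lemma hext_face0 m m' (f : Hom m m') :
  hcomp (faceY ord0 false) (hext f) = hcomp f (faceY ord0 false).
Proof.
apply/ffunP => i; rewrite !ffunE.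
case: (unliftP ord0 i) => [j|] Ei; last by rewrite ffunE unlift_none.
by case: (f j) => [k|d] //; rewrite ffunE liftK.
Qed.

Lemma face0_proj m : hcomp (faceY ord0 false) (projY m) = hid m.
Proof. by apply/ffunP => j; rewrite !ffunE liftK. Qed.

Section Construction.
Variables (A : cset) (kA : UKan (toterm A)) (B : cset) (pi : cmap B (expI A)) (kpi : UKan pi).
Variables (b : cmap A B) (hb : ccomp pi b = rI A).

Lemma pi_bE n (x : A n) : cfun pi (cfun b x) = cfun (rI A) x.
Proof. exact: (cfun_congr x hb). Qed.

(** Fillers are only given over parameter cubes of positive dimension, so an
    m-cube is first pulled back along [I^(m+1) -> I^m]; [jfun] restricts back
    along the face [x_1 = 0]. *)
Definition weaken_path m (g : expI A m) : cmap (cprod (Icube m.+1) (Icube 1)) A :=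
  ccomp g (cprodmap (proj m) (cid _)).

Definition contr_box m (g : expI A m) : cmap (cprod (Icube m.+1) (Box 1 true)) A :=
  ccomp (weaken_path g) (cprodmap (cid _) box_meet_map).

Lemma contr_box_fib m (g : expI A m) :
  ccomp (toterm A) (contr_box g) = ccomp (toterm _) (cprodmap (cid _) (boxinc 1 true)).
Proof. exact: cmap_ext. Qed.

Definition contr_fill m (g : expI A m) := kfill kA (contr_box_fib g).

Lemma contr_fill_box m (g : expI A m) n (z : Hom m.+1 n) (a : Hom 2 n) :
  inbox true a ->
  cfun (contr_fill g) ((z, a) : cprod (Icube m.+1) (Icube 2) n) =
  cfun (weaken_path g) ((z, box_meet a) : cprod (Icube m.+1) (Icube 1) n).
Proof. by move=> w; rewrite -[a]/(proj1_sig (exist _ a w : Box 1 true n)) kfill_boxE. Qed.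

Lemma contr_fill_nat m m' (f : Hom m m') (g : expI A m) :
  contr_fill (cact f g) = ccomp (contr_fill g) (cprodmap (yon (hext f)) (cid _)).
Proof.
symmetry; apply: kfill_unifE; first exact: cmap_ext.
by apply: cmap_ext => n [z a] /=; rewrite -!hcomp_assoc hext_proj.
Qed.

Definition contr_path_at m (g : expI A m) m' (z : Hom m.+1 m') (s : Hom 1 m') : expI A m'.
Proof.
refine (@CMap (cprod (Icube m') (Icube 1)) A
   (fun n p => cfun (contr_fill g)
      ((hcomp p.1 z, cube_pair p.2 (hcomp p.1 s)) : cprod (Icube m.+1) (Icube 2) n)) _).
by move=> n n' h [y t] /=; rewrite -(cnat (contr_fill g)) /= cube_pair_nat !hcomp_assoc.
Defined.

Definition contr_path m (g : expI A m) : cmap (cprod (Icube m.+1) (Icube 1)) (expI A).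
Proof.
refine (@CMap (cprod (Icube m.+1) (Icube 1)) (expI A)
   (fun m' p => contr_path_at g p.1 p.2) _).
by move=> n n' h [z s]; apply: cmap_ext => k [y t] /=; rewrite !hcomp_assoc.
Defined.

Definition lift_start m (g : expI A m) : cmap (cprod (Icube m.+1) (Box 0 true)) B :=
  ccomp b (ccomp (weaken_path g) (cprodmap (cid _) (cconst0 _))).

Lemma lift_start_fib m (g : expI A m) :
  ccomp pi (lift_start g) = ccomp (contr_path g) (cprodmap (cid _) (boxinc 0 true)).
Proof.
apply: cmap_ext => n [z [a /inbox1P Ea]] /=; rewrite pi_bE Ea.
apply: cmap_ext => k [y t] /=.
rewrite endpt_nat contr_fill_box ?box_meet_pair0; last exact: inbox_pair_endpt.
by rewrite -(cnat g) /= hcomp_assoc endpt_nat.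
Qed.

Definition lift_fill m (g : expI A m) := kfill kpi (lift_start_fib g).

Lemma lift_fill_nat m m' (f : Hom m m') (g : expI A m) :
  lift_fill (cact f g) = ccomp (lift_fill g) (cprodmap (yon (hext f)) (cid _)).
Proof.
symmetry; apply: kfill_unifE.
  apply: cmap_ext => n [z s]; apply: cmap_ext => k [y t] /=.
  by rewrite contr_fill_nat /= !hcomp_assoc.
by apply: cmap_ext => n [z a] /=; rewrite -!hcomp_assoc hext_proj.
Qed.

Definition jfun m (g : expI A m) : B m :=
  cfun (lift_fill g) ((faceY ord0 false, endpt true m) : cprod (Icube m.+1) (Icube 1) m).

Lemma jfun_nat m m' (f : Hom m m') (g : expI A m) : jfun (cact f g) = cact f (jfun g).
Proof. by rewrite /jfun lift_fill_nat -(cnat (lift_fill g)) /= hext_face0 endpt_nat. Qed.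

Definition jmap : cmap (expI A) B := CMap jfun_nat.

Lemma jmap_section : ccomp pi jmap = cid (expI A).
Proof.
apply: cmap_ext => m g; rewrite /= /jfun /lift_fill kfill_fibE.
apply: cmap_ext => n [y t] /=.
rewrite endpt_nat contr_fill_box ?box_meet_pair1; last exact: inbox_pair_endpt.
by rewrite /= -hcomp_assoc face0_proj hcomp_id_r.
Qed.

End Construction.

Section ConstantPaths.
Variables (A : cset) (kA : UKan (toterm A)) (nA : normal kA).
Variables (B : cset) (pi : cmap B (expI A)) (kpi : UKan pi) (npi : normal kpi).
Variables (b : cmap A B) (hb : ccomp pi b = rI A).

Lemma contr_fill_r n (x : A n) :
  contr_fill kA (cfun (rI A) x) =
  ccomp (weaken_path (cfun (rI A) x)) (cprodmap (cid _) (proj 1)).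
Proof. by apply: (kfill_degenerate nA); apply: cmap_ext => k [z a]. Qed.

Lemma lift_fill_r n (x : A n) k (z : Hom n.+1 k) (s : Hom 1 k) :
  cfun (lift_fill kA kpi hb (cfun (rI A) x)) ((z, s) : cprod (Icube n.+1) (Icube 1) k) =
  cfun b (cact (hcomp z (projY n)) x).
Proof.
rewrite /lift_fill (kfill_degenerate npi
  (c := ccomp b (ccomp (weaken_path (cfun (rI A) x)) (cprodmap (cid _) (cconst0 _))))) //=.
- apply: cmap_ext => m [y t]; apply: cmap_ext => j [w u] /=.
  by rewrite contr_fill_r /= (pi_bE hb) /= -cact_comp hcomp_assoc.
- exact: cmap_ext.
Qed.

Lemma jmap_r : ccomp (jmap kA kpi hb) (rI A) = b.
Proof. by apply: cmap_ext => n x; rewrite /= /jfun lift_fill_r face0_proj cact_id. Qed.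

End ConstantPaths.

Theorem proposition3p13 (A : cset) (kA : UKan (toterm A)) (nA : normal kA)
  (B : cset) (pi : cmap B (expI A)) (kpi : UKan pi) (npi : normal kpi)
  (b : cmap A B) (hb : ccomp pi b = rI A) :
  exists j : cmap (expI A) B, ccomp pi j = cid (expI A) /\ ccomp j (rI A) = b.
Proof. by exists (jmap kA kpi hb); split; [exact: jmap_section | exact: jmap_r]. Qed.
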